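(* For every temporal oriented tree $\mathcal T$, the connectivity graph $G$ of $\mathcal T$ contains no odd hole, i.e., no induced cycle of odd length at least $5$.
   Context: A temporal digraph is a pair $(D,\lambda)$ with $D=(V,A)$ a finite digraph and $\lambda:A\to 2^{\{1,\dots,t_{\max}\}}$ giving the time-steps at which each arc is active. A temporal oriented tree $\mathcal T=(T,\lambda)$ is one whose underlying digraph $T$ is an orientation of a tree. A temporal path is a sequence $(v_1,v_2,t_1),\dots,(v_{k-1},v_k,t_{k-1})$ with pairwise distinct $v_i$, $\overrightarrow{v_iv_{i+1}}\in A$, $t_i\in\lambda(\overrightarrow{v_iv_{i+1}})$ and $t_1<\dots<t_{k-1}$. Two vertices $u\ne v$ are temporally connected if there is a temporal path from $u$ to $v$ or from $v$ to $u$. The connectivity graph of $\mathcal T$ is the undirected graph $G$ with $V(G)=V(T)$ and $uv\in E(G)$ iff $u\neq v$ and $u,v$ are temporally connected. *)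

From mathcomp Require Import all_boot.
Set Implicit Arguments. Unset Strict Implicit. Unset Printing Implicit Defensive.

Definition und_adj (V : finType) (A : rel V) : rel V := fun u v => A u v || A v u.

(* A is an orientation of a tree: no loops, no pair of opposite arcs (so the
   underlying graph is simple and each edge is oriented exactly once), the
   underlying undirected graph is nonempty, connected and acyclic. *)
Definition is_oriented_tree (V : finType) (A : rel V) : Prop :=
  [/\ 0 < #|V|,
      (forall v, ~~ A v v),
      (forall u v, A u v -> ~~ A v u),
      (forall u v, connect (und_adj A) u v) &
      (forall c : seq V, uniq c -> 3 <= size c -> ~~ cycle (und_adj A) c)].

(* lam : V -> V -> nat -> bool; lam u v t means arc uv is active at time t.
   Time labels lie in {1, ..., tmax}. *)
Definition valid_labels (V : finType) (A : rel V) (tmax : nat)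
  (lam : V -> V -> nat -> bool) : Prop :=
  forall u v t, lam u v t -> A u v /\ 1 <= t <= tmax.

Definition temporal_path (V : finType) (A : rel V)
  (lam : V -> V -> nat -> bool) (u v : V) : Prop :=
  exists (s : seq V) (ts : seq nat),
    [/\ size ts = size s, uniq (u :: s), last u s = v,
        sorted ltn ts &
        forall i, i < size s ->
          A (nth u (u :: s) i) (nth u s i) /\
          lam (nth u (u :: s) i) (nth u s i) (nth 0 ts i)].

Definition conn_edge (V : finType) (A : rel V)
  (lam : V -> V -> nat -> bool) (u v : V) : Prop :=
  u <> v /\ (temporal_path A lam u v \/ temporal_path A lam v u).

Definition induced_cycle (V : finType) (E : V -> V -> Prop) (c : seq V) : Prop :=
  if c is x0 :: _ then
  [/\ uniq c, 3 <= size c &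
      forall i j, i < size c -> j < size c ->
        (E (nth x0 c i) (nth x0 c j) <->
         (j == (i.+1 %% size c)) || (i == (j.+1 %% size c)))]
  else False.

Definition odd_hole (V : finType) (E : V -> V -> Prop) (c : seq V) : Prop :=
  [/\ induced_cycle E c, 5 <= size c & odd (size c)].

From mathcomp Require Import all_boot zify.
From Stdlib Require Import Classical.
Set Implicit Arguments. Unset Strict Implicit. Unset Printing Implicit Defensive.

(* Orient each edge of an odd hole along a temporal path realising it.  An odd
   cycle cannot be oriented alternately, so some hole vertex b has neighbours p
   and n with temporal paths p ~> b ~> n.  In an oriented tree this forces p and
   n into different components of T - b: the arcs entering and leaving b on
   these paths are distinct (no opposite arcs), and a walk from p to n avoiding
   b would close a cycle through b.  But the rest of the hole joins p to n
   avoiding b: a temporal path realising a hole edge st with s, t <> b that ran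
   through b would make both s and t adjacent to b in the connectivity graph,
   i.e. a triangle in a hole of length at least 4. *)

Definition csucc (k t : nat) : nat := t.+1 %% k.

Definition cycle_adj (k i j : nat) : bool := (j == csucc k i) || (i == csucc k j).

Lemma csuccE k t : t < k -> csucc k t = if t.+1 == k then 0 else t.+1.
Proof.
by move=> ltk; rewrite /csucc; case: eqP => [->|/eqP ne]; rewrite ?modnn // modn_small // ltn_neqAle ne.
Qed.

Lemma csucc_lt k t : 0 < k -> csucc k t < k.
Proof. exact: ltn_pmod. Qed.

Lemma cycle_adj_triangle k i j l : 3 < k -> i < k -> j < k -> l < k ->
  cycle_adj k i j -> cycle_adj k j l -> cycle_adj k i l -> False.
Proof. by move=> k_gt3 ik jk lk; rewrite /cycle_adj !csuccE //; do !case: eqP; lia. Qed.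

Lemma odd_cycle_transit (k : nat) (R : nat -> nat -> Prop) : odd k ->
  (forall t, t < k -> R t (csucc k t) \/ R (csucc k t) t) ->
  exists2 t, t < k &
    let j := csucc k t in let n := csucc k j in (R t j /\ R j n) \/ (R n j /\ R j t).
Proof.
move=> odd_k orient; apply: NNPP => no_transit.
have k_gt0 : 0 < k by rewrite lt0n; apply: contraTneq odd_k => ->.
pose O t := R t (csucc k t).
have flip t : t < k -> O (csucc k t) <-> ~ O t.
  move=> tk; split=> [Os Ot | nOt]; first by apply: no_transit; exists t => //; left.
  have [Os|back] := orient _ (csucc_lt t k_gt0); first by [].
  case: (orient t tk) => // fwd; exfalso; apply: no_transit; exists t => //; by right.
have parity t : t < k -> O t <-> (if odd t then ~ O 0 else O 0).
  elim: t => [//|t IH] lt_tk.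
  have := flip t (ltnW lt_tk); rewrite csuccE ?(ltnW lt_tk) // (ltn_eqF lt_tk).
  have := IH (ltnW lt_tk); rewrite /=; case: (odd t) => /= ? ?; case: (classic (O 0)); tauto.
have k1_lt : k.-1 < k by rewrite prednK.
have := flip _ k1_lt; rewrite csuccE // prednK // eqxx.
have := parity _ k1_lt; rewrite -[odd k.-1]negbK -oddS prednK // odd_k /=; tauto.
Qed.

Lemma connect_cycle_without (V : finType) (e : rel V) (f : nat -> V) (k j : nat) :
  symmetric e -> j < k ->
  (forall t, t < k -> t != j -> csucc k t != j -> connect e (f t) (f (csucc k t))) ->
  forall i i', i < k -> i' < k -> i != j -> i' != j -> connect e (f i) (f i').
Proof.
move=> e_sym jk edge; have c_sym := sym_connect_sym e_sym.
have chain lo hi : lo <= hi < k -> (j < lo) || (hi < j) -> connect e (f lo) (f hi).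
  elim: hi => [|h IH] /andP [lo_hi hik] out_j; first by rewrite (_ : lo = 0) //; lia.
  have [h_lt_lo|lo_le_h] := ltnP h lo; first by rewrite (_ : lo = h.+1) //; lia.
  apply: connect_trans (IH _ _) _; rewrite ?lo_le_h /=; try lia.
  by have := edge h; rewrite csuccE ?(ltn_eqF hik); [apply; lia | lia].
move=> i i'; wlog le_ii' : i i' / i <= i'.
  by move=> wl; case: (leqP i i') => [|/ltnW] le ik i'k ij i'j; [|rewrite c_sym]; apply: wl.
move=> ik i'k ij i'j.
have [lt_ji|le_ij] := ltnP j i; first by apply: chain; lia.
have [lt_i'j|le_ji'] := ltnP i' j; first by apply: chain; lia.
have k_gt0 : 0 < k by lia.
have i_0 : connect e (f 0) (f i) by apply: chain; lia.
have i'_k1 : connect e (f i') (f k.-1) by apply: chain; lia.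
have k1_0 : connect e (f k.-1) (f 0).
  by have := edge k.-1; rewrite csuccE prednK ?eqxx //; apply; lia.
by rewrite c_sym; apply: connect_trans (connect_trans i'_k1 k1_0) i_0.
Qed.

Definition avoid_adj (V : finType) (A : rel V) (b : V) : rel V :=
  fun x y => [&& und_adj A x y, x != b & y != b].

Section OrientedTree.

Variables (V : finType) (A : rel V).

Lemma avoid_adj_sym b : symmetric (avoid_adj A b).
Proof. by move=> x y; rewrite /avoid_adj /und_adj orbC [(x != b) && _]andbC. Qed.

Lemma avoid_adj_path_notin b x s : path (avoid_adj A b) x s -> b \notin s.
Proof.
elim: s x => //= y s IH x /andP [/and3P [_ _ yb] p].
by rewrite inE negb_or eq_sym yb (IH y).
Qed.

Lemma connect_avoid_path b u s :
  path A u s -> b \notin u :: s -> connect (avoid_adj A b) u (last u s).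
Proof.
move=> p bs; apply/connectP; exists s => //.
elim: s u bs p => //= x s IH u; rewrite !inE !negb_or => /and3P [bu bx bs] /andP [ux p].
rewrite /avoid_adj /und_adj ux eq_sym bu eq_sym bx /=.
by apply: IH; rewrite // inE negb_or bx.
Qed.

Hypothesis tree : is_oriented_tree A.

Lemma arc_pair_separates a b c : A a b -> A b c -> ~~ connect (avoid_adj A b) a c.
Proof.
have [_ irr asym _ acyclic] := tree.
move=> ab bc; apply/negP => /connectP [p0 p0_path c_last].
have ac : a != c by apply: contraTneq ab => ->; exact: asym.
have ab' : a != b by apply: contraTneq ab => ->; exact: irr.
case: (shortenP p0_path) c_last ac bc => p p_path p_uniq _ -> ac bc.
have bp := avoid_adj_path_notin p_path.
have p_und : path (und_adj A) a p by apply: sub_path p_path => x y /and3P [].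
have := acyclic (b :: a :: p); rewrite cons_uniq inE negb_or eq_sym ab' bp p_uniq.
have -> : 2 < (size p).+2 by case: p ac {p_path p_uniq bp p_und bc} => //=; rewrite eqxx.
by rewrite /= rcons_path p_und /und_adj ab bc !orbT => /(_ isT isT).
Qed.

Variable lam : V -> V -> nat -> bool.

Local Notation tpath := (temporal_path A lam).

Lemma temporal_path_walk u v : tpath u v ->
  exists2 s, [/\ path A u s, uniq (u :: s) & last u s = v] &
    {in s, forall w, tpath u w /\ tpath w v}.
Proof.
move=> [s [ts [size_ts s_uniq s_last ts_sorted steps]]].
exists s; first by split=> //; apply/(pathP u) => i /steps [].
move=> w ws; have lt_is : index w s < size s by rewrite index_mem.
rewrite -(nth_index u ws); move: (index w s) lt_is => i lt_is.
have cons_take m : u :: take m s = take m.+1 (u :: s) by [].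
have drop_i : drop i s = nth u s i :: drop i.+1 s by rewrite (drop_nth u lt_is).
split.
- exists (take i.+1 s), (take i.+1 ts); split.
  + by rewrite !size_takel // size_ts.
  + by rewrite cons_take take_uniq.
  + by rewrite (take_nth u lt_is) last_rcons.
  + exact: take_sorted.
  + move=> m; rewrite size_takel // cons_take => lt_mi.
    by rewrite !nth_take //; [apply: steps; lia | lia].
- exists (drop i.+1 s), (drop i.+1 ts); split.
  + by rewrite !size_drop size_ts.
  + by rewrite -drop_i drop_uniq //; case/andP: s_uniq.
  + by rewrite -s_last -[in RHS](cat_take_drop i s) drop_i last_cat.
  + exact: drop_sorted.
  + move=> m; rewrite size_drop -drop_i -[drop i s]/(drop i.+1 (u :: s)) => lt_m.
    rewrite !nth_drop !(set_nth_default u (nth u s i)); try by rewrite /=; lia.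
    by apply: steps; lia.
Qed.

Lemma temporal_path_avoid_or_through u v b : tpath u v -> u != b -> v != b ->
  connect (avoid_adj A b) u v \/ (tpath u b /\ tpath b v).
Proof.
move=> /temporal_path_walk [s [s_path _ <-] split_at] ub vb.
have [bs|bs] := boolP (b \in s); first by right; apply: split_at.
by left; apply: connect_avoid_path; rewrite // inE negb_or eq_sym ub.
Qed.

Lemma temporal_transit_separates x b y : tpath x b -> tpath b y -> x != b -> y != b ->
  ~~ connect (avoid_adj A b) x y.
Proof.
move=> /temporal_path_walk [s [s_path s_uniq s_last] _].
move=> /temporal_path_walk [s' [s'_path s'_uniq s'_last] _] xb yb.
case/lastP: s s_path s_uniq s_last => [|s1 b'] s_path s_uniq /= s_last.
  by rewrite s_last eqxx in xb.
rewrite last_rcons in s_last; subst b'.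
case: s' s'_path s'_uniq s'_last => [|c s2] s'_path s'_uniq /= s'_last.
  by rewrite s'_last eqxx in yb.
move: s_path s'_path; rewrite rcons_path => /andP [s1_path ab] /andP [bc s2_path].
have b_s1 : b \notin x :: s1 by move: s_uniq; rewrite -rcons_cons rcons_uniq => /andP [].
have b_s2 : b \notin c :: s2 by case/andP: s'_uniq.
have a_x := connect_avoid_path s1_path b_s1.
have c_y := connect_avoid_path s2_path b_s2; rewrite s'_last in c_y.
apply: contra (arc_pair_separates ab bc) => x_y.
have c_sym := sym_connect_sym (avoid_adj_sym b).
by rewrite c_sym in a_x; apply: connect_trans a_x (connect_trans x_y _); rewrite c_sym.
Qed.

Section Hole.

Variables (x0 : V) (c : seq V).
Hypotheses (hole : induced_cycle (conn_edge A lam) (x0 :: c)) (k_gt3 : 3 < size (x0 :: c)).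

Local Notation k := (size (x0 :: c)).
Local Notation f := (nth x0 (x0 :: c)).

Lemma hole_nth_neq i j : i < k -> j < k -> i != j -> f i != f j.
Proof. by have [c_uniq _ _] := hole; move=> ik jk; rewrite nth_uniq. Qed.

Lemma hole_adj i j : i < k -> j < k -> conn_edge A lam (f i) (f j) <-> cycle_adj k i j.
Proof. by have [_ _ adj] := hole; apply: adj. Qed.

Lemma hole_edge t : t < k -> conn_edge A lam (f t) (f (csucc k t)).
Proof. by move=> tk; apply/hole_adj; rewrite ?csucc_lt // /cycle_adj eqxx. Qed.

Lemma hole_connect_without j i i' : j < k -> i < k -> i' < k -> i != j -> i' != j ->
  connect (avoid_adj A (f j)) (f i) (f i').
Proof.
move=> jk; have k_gt0 : 0 < k by [].
have no_detour s s' : s < k -> s' < k -> s != j -> s' != j ->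
    tpath (f s) (f j) -> tpath (f j) (f s') -> cycle_adj k s s' -> False.
  move=> sk s'k sj s'j s_j j_s'; apply: (cycle_adj_triangle k_gt3 sk jk s'k).
  - by apply/hole_adj => //; split; [apply/eqP/hole_nth_neq | left].
  - by apply/hole_adj => //; split; [apply/eqP; rewrite eq_sym hole_nth_neq | left].
have edge t : t < k -> t != j -> csucc k t != j ->
    connect (avoid_adj A (f j)) (f t) (f (csucc k t)).
  move=> tk tj sj; have sk := csucc_lt t k_gt0.
  have tj' := hole_nth_neq tk jk tj; have sj' := hole_nth_neq sk jk sj.
  have ts_adj : cycle_adj k t (csucc k t) by rewrite /cycle_adj eqxx.
  have [_ [ts|st]] := hole_edge tk.
  - have [//|[t_j j_s]] := temporal_path_avoid_or_through ts tj' sj'.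
    by case: (no_detour t (csucc k t)).
  - rewrite (sym_connect_sym (avoid_adj_sym _)).
    have [//|[s_j j_t]] := temporal_path_avoid_or_through st sj' tj'.
    by case: (no_detour (csucc k t) t); rewrite // /cycle_adj orbC.
exact: connect_cycle_without (avoid_adj_sym _) jk edge i i'.
Qed.

Lemma hole_even : ~~ odd k.
Proof.
apply/negP => odd_k; have k_gt0 : 0 < k by [].
have orient t : t < k -> tpath (f t) (f (csucc k t)) \/ tpath (f (csucc k t)) (f t).
  by move=> /hole_edge [].
have [t tk /= transit] := odd_cycle_transit (R := fun a b => tpath (f a) (f b)) odd_k orient.
set j := csucc k t in transit; set n := csucc k j in transit.
have jk : j < k by exact: csucc_lt.
have nk : n < k by exact: csucc_lt.
have succ_ne s : s < k -> s != csucc k s by move=> sk; rewrite csuccE //; case: ifP => /eqP; lia.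
have tj : t != j by exact: succ_ne.
have nj : n != j by rewrite eq_sym; exact: succ_ne.
have sep := hole_connect_without jk tk nk tj nj.
have [tj' nj'] := (hole_nth_neq tk jk tj, hole_nth_neq nk jk nj).
case: transit => [[t_j j_n]|[n_j j_t]].
- by move: sep; apply/negP; apply: temporal_transit_separates t_j j_n tj' nj'.
- rewrite (sym_connect_sym (avoid_adj_sym _)) in sep.
  by move: sep; apply/negP; apply: temporal_transit_separates n_j j_t nj' tj'.
Qed.

End Hole.

End OrientedTree.

Theorem mainTheorem8 (V : finType) (A : rel V) (tmax : nat)
  (lam : V -> V -> nat -> bool) :
  is_oriented_tree A -> valid_labels A tmax lam ->
  forall c : seq V, ~ odd_hole (conn_edge A lam) c.
Proof.
move=> tree _ [|x0 c] [hole k_ge5 odd_k] //.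
by have := hole_even tree hole (ltnW k_ge5); rewrite odd_k.
Qed.
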